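(* Let $m \geq 0$, $n \geq 1$ be integers and let $c = (c^t; c^b)$ be a stable configuration on $K_{m,n}^0$. For $j \in \{1,\ldots,n\}$ define $k_j := |\{ i \in \{1,\ldots,m\} : c^t_i < j\}|$, and let $(\tilde{c}^b_1, \ldots, \tilde{c}^b_n)$ be the non-decreasing rearrangement of $c^b$. Then $c$ is deterministically recurrent if and only if $\tilde{c}^b_j \geq k_j$ for all $j \in \{1, \ldots, n\}$.
   Context: $K_{m,n}^0$ is the complete bipartite graph with ''top'' vertices $v^t_0, v^t_1, \ldots, v^t_m$ and ''bottom'' vertices $v^b_1, \ldots, v^b_n$, with an edge between every top vertex and every bottom vertex; $v^t_0$ is the sink. A configuration is a vector $c = (c^t_1, \ldots, c^t_m; c^b_1, \ldots, c^b_n)$ of non-negative integers ($c^*_i$ = number of grains at $v^*_i$). $c$ is stable if $c^t_i < n$ for all $i$ and $c^b_j < m+1$ for all $j$ (number of grains less than the degree). Abelian sandpile model (ASM): an unstable non-sink vertex topples by sending one grain to each of its neighbours (for bottom vertices this includes the sink); grains sent to the sink disappear. Repeated toppling from any configuration reaches a unique stable configuration independent of toppling order. In the Markov chain on stable configurations which at each step adds a grain to a uniformly random non-sink vertex and then stabilises by the ASM, a stable configuration is deterministically recurrent if it is a recurrent state (appears infinitely often). *)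

From mathcomp Require Import all_boot.
Set Implicit Arguments. Unset Strict Implicit. Unset Printing Implicit Defensive.

(* A configuration on K_{m,n}^0: grains on top vertices v^t_1..v^t_m
   (indexed by 'I_m, index i stands for v^t_{i+1}) and on bottom vertices
   v^b_1..v^b_n (indexed by 'I_n). The sink v^t_0 carries no grains. *)
Definition config (m n : nat) := ({ffun 'I_m -> nat} * {ffun 'I_n -> nat})%type.

Definition ctop m n (c : config m n) := c.1.
Definition cbot m n (c : config m n) := c.2.

(* stable: fewer grains than the degree at every non-sink vertex
   (top vertices have degree n, bottom vertices have degree m+1). *)
Definition stable m n (c : config m n) : Prop :=
  (forall i, ctop c i < n) /\ (forall j, cbot c j < m.+1).

Inductive topple_step (m n : nat) : config m n -> config m n -> Prop :=
| topple_top (c : config m n) (i : 'I_m) :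
    n <= ctop c i ->
    topple_step c
      ([ffun i' => if i' == i then ctop c i' - n else ctop c i'],
       [ffun j => (cbot c j).+1])
| topple_bot (c : config m n) (j : 'I_n) :
    m.+1 <= cbot c j ->
    topple_step c
      ([ffun i => (ctop c i).+1],
       [ffun j' => if j' == j then cbot c j' - m.+1 else cbot c j']).

Inductive star (T : Type) (R : T -> T -> Prop) : T -> T -> Prop :=
| star_refl x : star R x x
| star_step x y z : R x y -> star R y z -> star R x z.

Definition stabilises_to m n (c s : config m n) : Prop :=
  star (@topple_step m n) c s /\ stable s.

Definition vertex (m n : nat) := ('I_m + 'I_n)%type.

Definition add_grain m n (v : vertex m n) (c : config m n) : config m n :=
  match v with
  | inl i => ([ffun i' => if i' == i then (ctop c i').+1 else ctop c i'], cbot c)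
  | inr j => (ctop c, [ffun j' => if j' == j then (cbot c j').+1 else cbot c j'])
  end.

(* Transitions with positive probability (1/(m+n) per vertex) of the Markov
   chain: add a grain at a non-sink vertex, then stabilise. *)
Definition chain_step m n (c d : config m n) : Prop :=
  exists v : vertex m n, stabilises_to (add_grain v c) d.

Definition accessible m n := star (@chain_step m n).

(* Recurrent state of the finite Markov chain on stable configurations:
   every state accessible from c leads back to c. *)
Definition det_recurrent m n (c : config m n) : Prop :=
  stable c /\ forall d, accessible c d -> accessible d c.

Definition kcount m n (c : config m n) (j : nat) : nat :=
  #|[set i : 'I_m | ctop c i < j]|.

(* non-decreasing rearrangement of c^b, as a list (0-indexed) *)
Definition sorted_bot m n (c : config m n) : seq nat :=
  sort leq [seq cbot c j | j <- enum 'I_n].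

From mathcomp Require Import all_boot all_order zify.
Set Implicit Arguments. Unset Strict Implicit. Unset Printing Implicit Defensive.
Import Order.TTheory.

(* Toppling terminates and is locally confluent, so stabilisation is well
   defined (Newman-style).  The argument is Dhar's criterion: c is recurrent iff
   no vertex set A u B is forbidden, i.e. has every vertex holding fewer grains
   than its neighbours inside the set.  Being allowed survives adding grains and
   toppling, and the maximal stable configuration is allowed and reachable from
   every stable configuration, so recurrent configurations are allowed.
   Conversely, from any stable d add grains up to e + (n on tops, m on bottoms),
   fire every top vertex once, and remove the resulting 2m extra grains per
   bottom vertex by burning: with one extra grain on each bottom vertex an
   allowed e fires every vertex exactly once and returns to e.  On K_{m,n} a
   forbidden set exists iff some sorted bottom value b~_j is below k_{j+1}: take
   A = {i | c^t_i <= j} and B = {j' | c^b_j' < k_{j+1}}. *)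

Section Rewriting.
Variables (T : Type) (R : T -> T -> Prop).

Lemma star_trans x y z : star R x y -> star R y z -> star R x z.
Proof. by elim=> // a b c Rab _ IH /IH; apply: star_step. Qed.

Variables (final : T -> Prop) (mu : T -> nat).
Hypothesis R_decr : forall x y, R x y -> mu y < mu x.
Hypothesis final_irreducible : forall x y, final x -> ~ R x y.
Hypothesis final_or_step : forall x, final x \/ exists y, R x y.
Hypothesis R_diamond :
  forall x y z, R x y -> R x z -> y = z \/ exists2 w, R y w & R z w.

Lemma star_final x y : final x -> star R x y -> y = x.
Proof.
by move=> fx xy; case: x y / xy fx => // x y z Rxy _ /final_irreducible/(_ Rxy).
Qed.

Lemma normal_form_exists x : exists2 s, star R x s & final s.
Proof.
have [k] := ubnP (mu x); elim: k x => // k IH x /ltnSE mu_x.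
have [fx|[y Rxy]] := final_or_step x; first by exists x => //; apply: star_refl.
have [s ys fs] := IH y (leq_trans (R_decr Rxy) mu_x).
by exists s => //; apply: star_step Rxy ys.
Qed.

Lemma normal_form_unique x s1 s2 :
  star R x s1 -> final s1 -> star R x s2 -> final s2 -> s1 = s2.
Proof.
have [k] := ubnP (mu x); elim: k x s1 s2 => // k IH x s1 s2 /ltnSE + xs1.
case: x s1 / xs1 => [x _ fx xs2 _|x y1 s1 Rxy1 y1s1 mu_x fs1 xs2].
  by rewrite (star_final fx xs2).
case: x s2 / xs2 Rxy1 mu_x => [x Rxy1 _ fx|x y2 s2 Rxy2 y2s2 Rxy1 mu_x fs2].
  by case: (final_irreducible fx Rxy1).
have lt_k z : R x z -> mu z < k by move=> /R_decr/leq_trans; apply.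
have [eq_y|[w y1w y2w]] := R_diamond Rxy1 Rxy2.
  by subst y2; exact: IH y1 s1 s2 (lt_k _ Rxy1) y1s1 fs1 y2s2 fs2.
have [s ws fs] := normal_form_exists w.
rewrite (IH y1 s1 s (lt_k _ Rxy1) y1s1 fs1 (star_step y1w ws) fs).
exact: IH y2 s s2 (lt_k _ Rxy2) (star_step y2w ws) fs y2s2 fs2.
Qed.

End Rewriting.

Lemma sum_update (I : finType) (f g : I -> nat) i :
  (forall j, j != i -> g j = f j) -> \sum_j g j + f i = \sum_j f j + g i.
Proof.
move=> gf; rewrite (bigD1 i) // [in RHS](bigD1 i) //= (eq_bigr f gf); lia.
Qed.

Section Sandpile.
Variables m n : nat.
Implicit Types (c d e x : config m n) (v : vertex m n) (P : {set 'I_m}) (Q : {set 'I_n}).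

Lemma config_ext c d : ctop c =1 ctop d -> cbot c =1 cbot d -> c = d.
Proof. by case: c d => [ct cb] [dt db] /ffunP /= -> /ffunP /= ->. Qed.

Definition fire_top c i : config m n :=
  ([ffun i' => if i' == i then ctop c i' - n else ctop c i'],
   [ffun j => (cbot c j).+1]).

Definition fire_bot c j : config m n :=
  ([ffun i => (ctop c i).+1],
   [ffun j' => if j' == j then cbot c j' - m.+1 else cbot c j']).

Definition cfg0 : config m n := ([ffun => 0], [ffun => 0]).

Definition const_bot K : config m n := ([ffun => 0], [ffun => K]).

Definition cfg_add c x : config m n :=
  ([ffun i => ctop c i + ctop x i], [ffun j => cbot c j + cbot x j]).

Lemma ctop_fire_top c i i' :
  ctop (fire_top c i) i' = if i' == i then ctop c i' - n else ctop c i'.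
Proof. exact: ffunE. Qed.

Lemma cbot_fire_top c i j : cbot (fire_top c i) j = (cbot c j).+1.
Proof. exact: ffunE. Qed.

Lemma ctop_fire_bot c j i : ctop (fire_bot c j) i = (ctop c i).+1.
Proof. exact: ffunE. Qed.

Lemma cbot_fire_bot c j j' :
  cbot (fire_bot c j) j' = if j' == j then cbot c j' - m.+1 else cbot c j'.
Proof. exact: ffunE. Qed.

Lemma ctop_add_grain v c i : ctop (add_grain v c) i = ctop c i + (v == inl i).
Proof.
case: v => [i0|j0]; rewrite /= ?ffunE ?addn0 //.
by rewrite -[inl _ == _]/(i0 == i) eq_sym; case: eqP; lia.
Qed.

Lemma cbot_add_grain v c j : cbot (add_grain v c) j = cbot c j + (v == inr j).
Proof.
case: v => [i0|j0]; rewrite /= ?ffunE ?addn0 //.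
by rewrite -[inr _ == _]/(j0 == j) eq_sym; case: eqP; lia.
Qed.

Lemma ctop_cfg0 i : ctop cfg0 i = 0. Proof. exact: ffunE. Qed.
Lemma cbot_cfg0 j : cbot cfg0 j = 0. Proof. exact: ffunE. Qed.

Lemma ctop_const_bot K i : ctop (const_bot K) i = 0. Proof. exact: ffunE. Qed.
Lemma cbot_const_bot K j : cbot (const_bot K) j = K. Proof. exact: ffunE. Qed.

Lemma ctop_cfg_add c x i : ctop (cfg_add c x) i = ctop c i + ctop x i.
Proof. exact: ffunE. Qed.

Lemma cbot_cfg_add c x j : cbot (cfg_add c x) j = cbot c j + cbot x j.
Proof. exact: ffunE. Qed.

Definition cfgE := (ctop_fire_top, cbot_fire_top, ctop_fire_bot, cbot_fire_bot,
  ctop_add_grain, cbot_add_grain, ctop_cfg0, cbot_cfg0, ctop_const_bot, cbot_const_bot,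
  ctop_cfg_add, cbot_cfg_add).

Lemma topple_stepP c c' : topple_step c c' ->
  (exists2 i, n <= ctop c i & c' = fire_top c i) \/
  (exists2 j, m < cbot c j & c' = fire_bot c j).
Proof. by case=> [{}c i | {}c j] le; [left; exists i | right; exists j]. Qed.

Lemma topple_diamond c c1 c2 : topple_step c c1 -> topple_step c c2 ->
  c1 = c2 \/ exists2 c3, topple_step c1 c3 & topple_step c2 c3.
Proof.
move=> /topple_stepP[[i ci ->]|[j cj ->]] /topple_stepP[[i' ci' ->]|[j' cj' ->]].
- have [<-|ii'] := eqVneq i i'; [by left | right].
  exists (fire_top (fire_top c i) i').
    by apply: topple_top; rewrite cfgE eq_sym (negbTE ii').
  rewrite (_ : fire_top (fire_top c i) i' = fire_top (fire_top c i') i).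
    by apply: topple_top; rewrite cfgE (negbTE ii').
  by apply: config_ext => k; rewrite !cfgE //; do 2 case: eqP => // ->.
- right; exists (fire_bot (fire_top c i) j'); first by apply: topple_bot; rewrite cfgE; lia.
  rewrite (_ : fire_bot (fire_top c i) j' = fire_top (fire_bot c j') i).
    by apply: topple_top; rewrite cfgE; lia.
  by apply: config_ext => k; rewrite !cfgE //; case: eqP => // ->; lia.
- right; exists (fire_top (fire_bot c j) i'); first by apply: topple_top; rewrite cfgE; lia.
  rewrite (_ : fire_top (fire_bot c j) i' = fire_bot (fire_top c i') j).
    by apply: topple_bot; rewrite cfgE; lia.
  by apply: config_ext => k; rewrite !cfgE //; case: eqP => // ->; lia.
- have [<-|jj'] := eqVneq j j'; [by left | right].
  exists (fire_bot (fire_bot c j) j').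
    by apply: topple_bot; rewrite cfgE eq_sym (negbTE jj').
  rewrite (_ : fire_bot (fire_bot c j) j' = fire_bot (fire_bot c j') j).
    by apply: topple_bot; rewrite cfgE (negbTE jj').
  by apply: config_ext => k; rewrite !cfgE //; do 2 case: eqP => // ->.
Qed.

Definition top_mass c := \sum_i ctop c i.
Definition bot_mass c := \sum_j cbot c j.
Definition grains c := top_mass c + bot_mass c.

Lemma top_mass_fire_top c i : n <= ctop c i -> top_mass (fire_top c i) + n = top_mass c.
Proof.
move=> ci; rewrite /top_mass.
have /sum_update : forall k, k != i -> ctop (fire_top c i) k = ctop c k.
  by move=> k /negbTE ki; rewrite cfgE ki.
rewrite cfgE eqxx; lia.
Qed.

Lemma bot_mass_fire_bot c j : m < cbot c j -> bot_mass (fire_bot c j) + m.+1 = bot_mass c.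
Proof.
move=> cj; rewrite /bot_mass.
have /sum_update : forall k, k != j -> cbot (fire_bot c j) k = cbot c k.
  by move=> k /negbTE kj; rewrite cfgE kj.
rewrite cfgE eqxx; lia.
Qed.

Lemma bot_mass_fire_top c i : bot_mass (fire_top c i) = bot_mass c + n.
Proof.
rewrite /bot_mass (eq_bigr (fun j => cbot c j + 1)) => [|j _]; last by rewrite cfgE addn1.
by rewrite big_split /= sum1_card card_ord.
Qed.

Lemma top_mass_fire_bot c j : top_mass (fire_bot c j) = top_mass c + m.
Proof.
rewrite /top_mass (eq_bigr (fun i => ctop c i + 1)) => [|i _]; last by rewrite cfgE addn1.
by rewrite big_split /= sum1_card card_ord.
Qed.

Lemma grains_add_grain v c : grains (add_grain v c) = (grains c).+1.
Proof.
rewrite /grains /top_mass /bot_mass; case: v => [i|j].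
  rewrite (eq_bigr (cbot c)) => [|j _]; last by rewrite cbot_add_grain addn0.
  have /sum_update : forall k, k != i -> ctop (add_grain (inl i) c) k = ctop c k.
    by move=> k ki; rewrite cfgE -[inl _ == _]/(i == k) eq_sym (negbTE ki) addn0.
  rewrite cfgE eqxx; lia.
rewrite (eq_bigr (ctop c)) => [|i _]; last by rewrite ctop_add_grain addn0.
have /sum_update : forall k, k != j -> cbot (add_grain (inr j) c) k = cbot c k.
  by move=> k kj; rewrite cfgE -[inr _ == _]/(j == k) eq_sym (negbTE kj) addn0.
rewrite cfgE eqxx; lia.
Qed.

Hypothesis n_gt0 : 0 < n.

(* Lexicographic in (grains, top_mass), encoded in nat since top_mass <= grains:
   a top firing moves n grains downwards, a bottom firing loses one to the sink. *)
Definition topple_measure c := grains c ^ 2 + top_mass c.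

Lemma topple_measure_decr c c' : topple_step c c' -> topple_measure c' < topple_measure c.
Proof.
rewrite /topple_measure /grains => /topple_stepP[[i ci ->]|[j cj ->]].
  have := top_mass_fire_top ci; have := bot_mass_fire_top c i.
  move: (top_mass _) (bot_mass _) (top_mass c) (bot_mass c) => t b t' b'; nia.
have := bot_mass_fire_bot cj; have := top_mass_fire_bot c j.
move: (top_mass _) (bot_mass _) (top_mass c) (bot_mass c) => t b t' b'; nia.
Qed.

Lemma stable_topple c c' : stable c -> ~ topple_step c c'.
Proof.
by case=> ct cb /topple_stepP[[i + _]|[j + _]]; rewrite leqNgt ?ct ?cb.
Qed.

Lemma stable_or_topple c : stable c \/ exists c', topple_step c c'.
Proof.
case: (pickP (fun i => n <= ctop c i)) => [i ci|ct].
  by right; exists (fire_top c i); apply: topple_top.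
case: (pickP (fun j => m < cbot c j)) => [j cj|cb].
  by right; exists (fire_bot c j); apply: topple_bot.
by left; split=> [i|j]; rewrite ltnNge ?ct ?cb.
Qed.

Lemma stabilisation_exists c : exists s, stabilises_to c s.
Proof.
have [s] := normal_form_exists topple_measure_decr stable_or_topple c.
by exists s.
Qed.

Lemma stabilisation_unique c s1 s2 : stabilises_to c s1 -> stabilises_to c s2 -> s1 = s2.
Proof.
move=> [cs1 ss1] [cs2 ss2].
exact: (normal_form_unique topple_measure_decr stable_topple stable_or_topple
  (@topple_diamond) cs1 ss1 cs2 ss2).
Qed.

Lemma stable_star c s : stable c -> star (@topple_step m n) c s -> s = c.
Proof. exact: (star_final stable_topple). Qed.

Lemma topple_cfg_add c c' x : topple_step c c' -> topple_step (cfg_add c x) (cfg_add c' x).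
Proof.
move=> /topple_stepP[[i ci ->]|[j cj ->]].
  rewrite (_ : cfg_add (fire_top c i) x = fire_top (cfg_add c x) i).
    by apply: topple_top; rewrite cfgE; lia.
  by apply: config_ext => k; rewrite !cfgE //; case: eqP => // ->; lia.
rewrite (_ : cfg_add (fire_bot c j) x = fire_bot (cfg_add c x) j).
  by apply: topple_bot; rewrite cfgE; lia.
by apply: config_ext => k; rewrite !cfgE //; case: eqP => // ->; lia.
Qed.

Lemma star_cfg_add c c' x :
  star (@topple_step m n) c c' -> star (@topple_step m n) (cfg_add c x) (cfg_add c' x).
Proof.
elim=> [y|y z w yz _ IH]; first exact: star_refl.
exact: star_step (topple_cfg_add x yz) IH.
Qed.

Lemma cfg_add0 c : cfg_add c cfg0 = c.
Proof. by apply: config_ext => k; rewrite !cfgE addn0. Qed.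

Lemma cfg_add_grain c v x : cfg_add c (add_grain v x) = cfg_add (add_grain v c) x.
Proof. by apply: config_ext => k; rewrite !cfgE; lia. Qed.

Lemma add_grain_inv x : x != cfg0 -> exists v x', x = add_grain v x'.
Proof.
move=> x_neq0.
case: (pickP (fun i => 0 < ctop x i)) => [i xi|xt].
  exists (inl i), ([ffun k => ctop x k - (k == i)], cbot x).
  apply: config_ext => k; rewrite !cfgE /= ?ffunE ?addn0 //.
  by rewrite -[inl _ == _]/(i == k); case: (eqVneq i k) => [<-|]; rewrite ?eqxx; lia.
case: (pickP (fun j => 0 < cbot x j)) => [j xj|xb].
  exists (inr j), (ctop x, [ffun k => cbot x k - (k == j)]).
  apply: config_ext => k; rewrite !cfgE /= ?ffunE ?addn0 //.
  by rewrite -[inr _ == _]/(j == k); case: (eqVneq j k) => [<-|]; rewrite ?eqxx; lia.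
case/eqP: x_neq0; apply: config_ext => k; rewrite cfgE; apply/eqP; rewrite -leqn0 leqNgt.
  exact: (negbT (xt k)).
exact: (negbT (xb k)).
Qed.

Lemma config_ind (P : config m n -> Prop) :
  P cfg0 -> (forall v x, P x -> P (add_grain v x)) -> forall x, P x.
Proof.
move=> P0 PS x; have [k] := ubnP (grains x); elim: k x => // k IH x.
have [->|/add_grain_inv[v [y ->]]] := eqVneq x cfg0; first by move=> _; apply: P0.
by rewrite grains_add_grain ltnS => y_lt; apply/PS/IH.
Qed.

Lemma accessible_stable c d : stable c -> accessible c d -> stable d.
Proof. by move=> + cd; elim: cd => // x y z [v [_ sy]] _ IH _; apply: IH. Qed.

Lemma accessible_cfg_add d x s : stable d -> stabilises_to (cfg_add d x) s -> accessible d s.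
Proof.
elim/config_ind: x d s => [|v x IH] d s sd [ds ss].
  by rewrite cfg_add0 in ds; rewrite (stable_star sd ds); apply: star_refl.
have [d1 [dd1 sd1]] := stabilisation_exists (add_grain v d).
have [s1 [d1s1 ss1]] := stabilisation_exists (cfg_add d1 x).
have -> : s = s1.
  apply: (stabilisation_unique (conj ds ss)); split=> //.
  by rewrite cfg_add_grain; apply: star_trans (star_cfg_add x dd1) d1s1.
by apply: star_step (IH d1 s1 sd1 (conj d1s1 ss1)); exists v.
Qed.

(* The vertex set A u B never contains the sink.  It is nonempty iff B is,
   since a top vertex of A would otherwise need fewer than #|B| = 0 grains. *)
Definition forbidden c (A : {set 'I_m}) (B : {set 'I_n}) : Prop :=
  [/\ B != set0, forall i, i \in A -> ctop c i < #|B|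
    & forall j, j \in B -> cbot c j < #|A|].

Definition allowed c : Prop := forall A B, ~ forbidden c A B.

Lemma allowed_topple c c' : topple_step c c' -> allowed c -> allowed c'.
Proof.
move=> /topple_stepP[[i0 ci0 ->]|[j0 cj0 ->]] c_allowed A B [B_neq0 A_low B_low].
- have [i0A|i0A] := boolP (i0 \in A).
    apply: (c_allowed (A :\ i0) B); split=> // [i|j jB].
      by rewrite !inE => /andP[/negbTE ii0 /A_low]; rewrite cfgE ii0.
    by have := B_low j jB; rewrite (cardsD1 i0 A) i0A cfgE add1n ltnS.
  apply: (c_allowed A B); split=> // [i iA|j jB].
    by have := A_low i iA; rewrite cfgE; case: eqP iA => [->|_ _]; [rewrite (negbTE i0A) | lia].
  by have := B_low j jB; rewrite cfgE; lia.
- have [j0B|j0B] := boolP (j0 \in B).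
    have /card_gt0P[i iA] := leq_ltn_trans (leq0n _) (B_low j0 j0B).
    apply: (c_allowed A (B :\ j0)); split=> [|i' /A_low|j].
    + have := A_low i iA; rewrite -card_gt0 (cardsD1 j0 B) j0B cfgE add1n ltnS.
      exact: leq_ltn_trans.
    + by rewrite (cardsD1 j0 B) j0B cfgE add1n ltnS.
    + by rewrite !inE => /andP[/negbTE jj0 /B_low]; rewrite cfgE jj0.
  apply: (c_allowed A B); split=> // [i iA|j jB].
    by have := A_low i iA; rewrite cfgE; lia.
  by have := B_low j jB; rewrite cfgE; case: eqP jB => [->|_ _]; [rewrite (negbTE j0B) | lia].
Qed.

Lemma allowed_add_grain v c : allowed c -> allowed (add_grain v c).
Proof.
move=> c_allowed A B [B_neq0 A_low B_low]; apply: (c_allowed A B); split=> // [i|j].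
  by move=> /A_low; rewrite cfgE; lia.
by move=> /B_low; rewrite cfgE; lia.
Qed.

Lemma allowed_accessible c d : accessible c d -> allowed c -> allowed d.
Proof.
elim=> // x y z [v [xy _]] _ IH /(@allowed_add_grain v) x_allowed; apply: IH.
by elim: xy x_allowed => // a b w /allowed_topple ab _ IHab /ab.
Qed.

(* Each vertex of P and Q fired once.  The truncated subtractions are only
   meaningful while every fired vertex had enough grains when it fired. *)
Definition fire_sets c (P : {set 'I_m}) (Q : {set 'I_n}) : config m n :=
  ([ffun i => ctop c i + #|Q| - (if i \in P then n else 0)],
   [ffun j => cbot c j + #|P| - (if j \in Q then m.+1 else 0)]).

Lemma ctop_fire_sets c P Q i :
  ctop (fire_sets c P Q) i = ctop c i + #|Q| - (if i \in P then n else 0).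
Proof. exact: ffunE. Qed.

Lemma cbot_fire_sets c P Q j :
  cbot (fire_sets c P Q) j = cbot c j + #|P| - (if j \in Q then m.+1 else 0).
Proof. exact: ffunE. Qed.

Lemma fire_sets0 c : fire_sets c set0 set0 = c.
Proof.
by apply: config_ext => k; rewrite (ctop_fire_sets, cbot_fire_sets) cards0 in_set0 !subn0 addn0.
Qed.

Lemma topple_fire_sets_top c P Q i :
  i \notin P -> n <= ctop c i + #|Q| -> (forall j, j \in Q -> m < cbot c j + #|P|) ->
  topple_step (fire_sets c P Q) (fire_sets c (i |: P) Q).
Proof.
move=> iP ci Q_legal.
rewrite (_ : fire_sets c (i |: P) Q = fire_top (fire_sets c P Q) i).
  by apply: topple_top; rewrite ctop_fire_sets (negbTE iP) subn0.
apply: config_ext => k; rewrite cfgE.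
  by rewrite !ctop_fire_sets in_setU1; case: eqP => [->|_] //=; rewrite (negbTE iP) subn0.
rewrite !cbot_fire_sets cardsU1 iP add1n addnS.
by case: ifP => // kQ; rewrite subSn // Q_legal.
Qed.

Lemma topple_fire_sets_bot c P Q j :
  j \notin Q -> m < cbot c j + #|P| -> (forall i, i \in P -> n <= ctop c i + #|Q|) ->
  topple_step (fire_sets c P Q) (fire_sets c P (j |: Q)).
Proof.
move=> jQ cj P_legal.
rewrite (_ : fire_sets c P (j |: Q) = fire_bot (fire_sets c P Q) j).
  by apply: topple_bot; rewrite cbot_fire_sets (negbTE jQ) subn0.
apply: config_ext => k; rewrite cfgE.
  rewrite !ctop_fire_sets cardsU1 jQ add1n addnS.
  by case: ifP => // kP; rewrite subSn // P_legal.
by rewrite !cbot_fire_sets in_setU1; case: eqP => [->|_] //=; rewrite (negbTE jQ) subn0.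
Qed.

Lemma star_fire_sets c P1 Q1 :
  (forall P Q, P \subset P1 -> Q \subset Q1 -> (P, Q) != (P1, Q1) ->
     (exists2 i, i \in P1 :\: P & n <= ctop c i + #|Q|) \/
     (exists2 j, j \in Q1 :\: Q & m < cbot c j + #|P|)) ->
  star (@topple_step m n) c (fire_sets c P1 Q1).
Proof.
move=> progress.
suff: forall P Q, P \subset P1 -> Q \subset Q1 ->
    (forall i, i \in P -> n <= ctop c i + #|Q|) ->
    (forall j, j \in Q -> m < cbot c j + #|P|) ->
    star (@topple_step m n) (fire_sets c P Q) (fire_sets c P1 Q1).
  by move/(_ set0 set0); rewrite fire_sets0 !sub0set; apply=> // ?; rewrite in_set0.
move=> P Q; have [k] := ubnP (#|P1 :\: P| + #|Q1 :\: Q|).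
elim: k P Q => // k IH P Q size_lt PP1 QQ1 P_legal Q_legal.
have [[-> ->]|PQ_neq] := eqVneq (P, Q) (P1, Q1); first exact: star_refl.
have [[i /setDP[iP1 iP] ci]|[j /setDP[jQ1 jQ] cj]] := progress P Q PP1 QQ1 PQ_neq.
- apply: star_step (topple_fire_sets_top iP ci Q_legal) (IH _ _ _ _ QQ1 _ _).
  + have -> : P1 :\: (i |: P) = (P1 :\: P) :\ i by apply/setP => x; rewrite !inE negb_or andbA.
    by rewrite (cardsD1 i (P1 :\: P)) !inE iP iP1 add1n addSn ltnS in size_lt.
  + by rewrite subUset sub1set iP1 PP1.
  + by move=> i'; rewrite in_setU1 => /predU1P[-> //|]; apply: P_legal.
  + move=> j /Q_legal /leq_trans; apply.
    by rewrite leq_add2l cardsU1 leq_addl.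
- apply: star_step (topple_fire_sets_bot jQ cj P_legal) (IH _ _ _ PP1 _ _ _).
  + have -> : Q1 :\: (j |: Q) = (Q1 :\: Q) :\ j by apply/setP => x; rewrite !inE negb_or andbA.
    by rewrite (cardsD1 j (Q1 :\: Q)) !inE jQ jQ1 add1n addnS ltnS in size_lt.
  + by rewrite subUset sub1set jQ1 QQ1.
  + move=> i /P_legal /leq_trans; apply.
    by rewrite leq_add2l cardsU1 leq_addl.
  + by move=> j'; rewrite in_setU1 => /predU1P[-> //|]; apply: Q_legal.
Qed.

Lemma burning e : allowed e -> star (@topple_step m n) (cfg_add e (const_bot 1)) e.
Proof.
move=> e_allowed; set c := cfg_add e (const_bot 1).
have -> : e = fire_sets c setT setT.
  apply: config_ext => k; rewrite (ctop_fire_sets, cbot_fire_sets) !cfgE in_setT cardsT card_ord.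
    by rewrite addn0 addnK.
  by rewrite -addnA add1n addnK.
apply: star_fire_sets => P Q _ _ PQ_neq.
have [/existsP[i /andP[iP ci]]|/existsPn top_stuck] :=
  boolP [exists i, (i \notin P) && (n <= ctop c i + #|Q|)].
  by left; exists i; rewrite // !inE iP.
have [/existsP[j /andP[jQ cj]]|/existsPn bot_stuck] :=
  boolP [exists j, (j \notin Q) && (m < cbot c j + #|P|)].
  by right; exists j; rewrite // !inE jQ.
have [Q_full|Q_neq] := eqVneq Q setT.
  have /subsetPn[i _ iP] : ~~ (setT \subset P).
    by rewrite subTset; apply: contraNneq PQ_neq => ->; rewrite Q_full.
  by have := top_stuck i; rewrite iP Q_full cardsT card_ord !cfgE addn0 leq_addl.
case: (e_allowed (~: P) (~: Q)); split=> [|i|j]; rewrite ?inE.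
- by apply: contra Q_neq => /eqP Q0; rewrite -[Q]setCK Q0 setC0.
- move=> iP; have := top_stuck i; have := cardsC Q; rewrite iP card_ord !cfgE; lia.
- move=> jQ; have := bot_stuck j; have := cardsC P; rewrite jQ card_ord !cfgE; lia.
Qed.

Lemma burning_iter e K : allowed e -> star (@topple_step m n) (cfg_add e (const_bot K)) e.
Proof.
move=> e_allowed; elim: K => [|K IH].
  by rewrite (_ : const_bot 0 = cfg0) // cfg_add0; apply: star_refl.
rewrite (_ : cfg_add e _ = cfg_add (cfg_add e (const_bot 1)) (const_bot K)).
  exact: star_trans (star_cfg_add _ (burning e_allowed)) IH.
by apply: config_ext => k; rewrite !cfgE; lia.
Qed.

Lemma star_fire_tops c : (forall i, n <= ctop c i) ->
  star (@topple_step m n) c (fire_sets c setT set0).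
Proof.
move=> c_high; apply: star_fire_sets => P Q _; rewrite subset0 => /eqP-> PQ_neq; left.
have /subsetPn[i _ iP] : ~~ (setT \subset P).
  by rewrite subTset; apply: contraNneq PQ_neq => ->.
by exists i; rewrite ?inE ?iP // cards0 addn0.
Qed.

Lemma accessible_allowed d e : stable d -> stable e -> allowed e -> accessible d e.
Proof.
move=> [d_top d_bot] e_stable e_allowed.
pose u : config m n := ([ffun i => ctop e i + n], [ffun j => cbot e j + m]).
pose x : config m n := ([ffun i => ctop u i - ctop d i], [ffun j => cbot u j - cbot d j]).
apply: (@accessible_cfg_add d x) => //; split=> //.
have -> : cfg_add d x = u.
  apply: config_ext => k; rewrite !cfgE /= !ffunE.
    by have := d_top k; lia.
  by have := d_bot k; lia.
have u_high i : n <= ctop u i by rewrite /= ffunE leq_addl.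
apply: star_trans (star_fire_tops u_high) _.
rewrite (_ : fire_sets u setT set0 = cfg_add e (const_bot (m + m))); first exact: burning_iter.
apply: config_ext => k; rewrite (ctop_fire_sets, cbot_fire_sets) !cfgE /= ffunE.
  by rewrite in_setT cards0 !addn0 addnK.
by rewrite in_set0 cardsT card_ord subn0 addnA.
Qed.

Definition cmax : config m n := ([ffun => n.-1], [ffun => m]).

Lemma stable_cmax : stable cmax.
Proof. by split=> k; rewrite /= ffunE // prednK. Qed.

Lemma allowed_cmax : allowed cmax.
Proof.
move=> A B [/set0Pn[j jB] _ /(_ j jB)]; rewrite /= ffunE ltnNge.
by have := max_card (mem A); rewrite card_ord => ->.
Qed.

Lemma recurrent_iff_allowed c : stable c -> det_recurrent c <-> allowed c.
Proof.
move=> c_stable; split=> [[_ back]|c_allowed].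
  have to_cmax := accessible_allowed c_stable stable_cmax allowed_cmax.
  exact: allowed_accessible (back _ to_cmax) allowed_cmax.
split=> // d cd.
exact: accessible_allowed (accessible_stable c_stable cd) c_stable c_allowed.
Qed.

End Sandpile.

Lemma sorted_count_ltn (s : seq nat) j k : sorted leq s -> j < size s ->
  (j < count (fun x => x < k) s) = (nth 0 s j < k).
Proof.
move=> s_sorted j_lt; have s_le : sorted <=%O s by [].
apply/idP/idP => [/(nth_count_lt 0 s_le) //|lt_k]; rewrite ltnNge; apply/negP => le_j.
have := @nth_count_ge _ _ k 0 s j s_le; rewrite le_j j_lt => /(_ isT).
by rewrite leEnat leqNgt lt_k.
Qed.

Lemma count_map_enum (T : finType) (U : Type) (f : T -> U) (p : pred U) :
  count p [seq f j | j <- enum T] = #|[set j | p (f j)]|.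
Proof.
rewrite count_map -sum1_count -sum1_card big_enum_cond /=.
by apply: eq_bigl => j; rewrite !inE.
Qed.

Lemma allowed_iff_sorted m n (c : config m n) :
  allowed c <-> forall j : 'I_n, kcount c j.+1 <= nth 0 (sorted_bot c) j.
Proof.
have s_sorted : sorted leq (sorted_bot c) by apply: sort_sorted; exact: leq_total.
have size_s : size (sorted_bot c) = n by rewrite size_sort size_map size_enum_ord.
have count_s (p : pred nat) : count p (sorted_bot c) = #|[set j | p (cbot c j)]|.
  by rewrite count_sort count_map_enum.
split=> [c_allowed j|sorted_high A B [B_neq0 A_low B_low]].
  rewrite leqNgt; apply/negP => lt_k; set k := kcount c j.+1 in lt_k.
  have B_big : j < #|[set j' | cbot c j' < k]|.
    by rewrite -(count_s (fun x => x < k)) sorted_count_ltn // size_s.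
  apply: (c_allowed [set i | ctop c i < j.+1] [set j' | cbot c j' < k]); split.
  - by rewrite -card_gt0; apply: leq_ltn_trans B_big.
  - by move=> i; rewrite inE => /leq_trans; apply.
  - by move=> j'; rewrite inE.
have B_gt0 : 0 < #|B| by rewrite card_gt0.
have B_le : #|B|.-1 < n by rewrite prednK // -[X in _ <= X](card_ord n) max_card.
set t := nth 0 (sorted_bot c) #|B|.-1.
have A_le : #|A| <= t.
  apply: leq_trans (sorted_high (Ordinal B_le)); rewrite /= prednK //.
  by apply: subset_leq_card; apply/subsetP => i /A_low; rewrite inE.
have : #|B| <= count (fun x => x < t) (sorted_bot c).
  rewrite count_s; apply: subset_leq_card; apply/subsetP => j /B_low.
  by rewrite inE => /leq_trans; apply.
by rewrite -(prednK B_gt0) sorted_count_ltn ?size_s // ltnn.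
Qed.

Theorem theorem4p1 (m n : nat) (c : config m n) :
  0 < n -> stable c ->
  (det_recurrent c <->
   forall j : 'I_n, kcount c j.+1 <= nth 0 (sorted_bot c) j).
Proof.
move=> n_gt0 c_stable.
exact: iff_trans (recurrent_iff_allowed n_gt0 c_stable) (allowed_iff_sorted c).
Qed.
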